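(* For $k\in\mathbb N_0$ and real $\alpha\ge0$ let $S^{(\alpha)}_k=\sum_{p\in\mathbb P_k}p^{-\alpha}$, where $\mathbb P_k=\{p^{(k)}_n:n\in\mathbb N\}$. The series $S^{(\alpha)}_k$ converges if and only if $\alpha>1$, or $\alpha=1$ and $k\ge2$. Moreover, for each $\alpha\ge1$, $S^{(\alpha)}_k\to0$ as $k\to+\infty$.
   Context: Let $p_n$ denote the $n$-th prime number. Define $p^{(0)}_n=n$ and recursively $p^{(k+1)}_n=p_{p^{(k)}_n}$ for $k\in\mathbb N_0$. *)

From mathcomp Require Import all_boot all_order all_algebra.
From mathcomp Require Import all_classical all_reals all_analysis.
Set Implicit Arguments. Unset Strict Implicit. Unset Printing Implicit Defensive.
Import Order.TTheory GRing.Theory Num.Theory.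

Lemma exists_prime_above (m : nat) : exists p, (m < p) && prime p.
Proof. by case: (prime_above m) => p Hmp Hp; exists p; rewrite Hmp Hp. Qed.

Definition next_prime (m : nat) : nat := ex_minn (exists_prime_above m).

(* nth_prime n = p_n, 1-indexed: p_1 = 2, p_2 = 3, p_3 = 5, ...
   (nth_prime 0 = 1 is an irrelevant junk value) *)
Definition nth_prime (n : nat) : nat := iter n next_prime 1.

(* iterated prime: iter_prime k n = p^{(k)}_n, with p^{(0)}_n = n and
   p^{(k+1)}_n = p_{p^{(k)}_n} *)
Definition iter_prime (k n : nat) : nat := iter k nth_prime n.

(* the n-th term (n >= 0) of S^{(alpha)}_k = sum_{m >= 1} (p^{(k)}_m)^{-alpha},
   i.e. term for m = n+1 *)
Definition S_term {R : realType} (k : nat) (alpha : R) (n : nat) : R :=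
  ((iter_prime k n.+1)%:R `^ (- alpha))%R.

(* Chebyshev's bounds, read off the central binomial coefficient, give
   m log m << p_m << m log m.  Iterating the upper bound along powers of two
   yields p^(k)_(2^J) << 2^J J^k, and applying the lower bound twice yields
   p_(p_m) >> m (log m)^2.  Grouping terms into dyadic blocks [2^j, 2^(j+1))
   then decides convergence: for alpha > 1 compare with sum n^(-alpha); for
   alpha = 1 the j-th block is O(1/j^2) when k = 2 and >> 1/j when k = 1; for
   alpha < 1 the partial sum up to 2^J is >= 2^((1-alpha)J) / poly(J).  Finally
   p^(k)_n = p^(2)_(p^(k-2)_n), so for alpha >= 1 the sum S_k is at most the
   tail of the convergent series S_2^(1) beyond index k-2, which tends to 0. *)

From mathcomp Require Import all_boot all_order all_algebra.
From mathcomp Require Import all_classical all_reals all_analysis.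
From mathcomp Require Import zify.
From mathcomp.algebra_tactics Require Import ring lra.
Import Order.TTheory GRing.Theory Num.Theory numFieldNormedType.Exports.

(** * Prime counting and Chebyshev bounds *)

Lemma next_primeP m : [/\ m < next_prime m, prime (next_prime m) &
  forall q, m < q -> prime q -> next_prime m <= q].
Proof.
rewrite /next_prime; case: ex_minnP => p /andP[mp pp] p_min.
by split => // q mq pq; apply: p_min; rewrite mq pq.
Qed.

Definition prime_pi (x : nat) : nat := count prime (iota 0 x.+1).

Lemma prime_piD a d : prime_pi (a + d) = prime_pi a + count prime (iota a.+1 d).
Proof. by rewrite /prime_pi -addSn iotaD count_cat. Qed.

Lemma leq_prime_pi : {homo prime_pi : a b / a <= b}.
Proof. by move=> a b ab; rewrite -(subnKC ab) prime_piD leq_addr. Qed.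

Lemma prime_pi_gap a y : a <= y < next_prime a -> prime_pi y = prime_pi a.
Proof.
case/andP=> ay y_lt; have [_ _ next_min] := next_primeP a.
rewrite -(subnKC ay) prime_piD (@eq_in_count _ _ pred0) ?count_pred0 ?addn0 // => i.
by rewrite mem_iota => /andP[ai iy] /=; apply/negP => /(next_min i ai); lia.
Qed.

Lemma prime_pi_next a : prime_pi (next_prime a) = (prime_pi a).+1.
Proof.
have [a_lt pr_next _] := next_primeP a.
rewrite -(ltn_predK a_lt) -addn1 prime_piD /= (ltn_predK a_lt) pr_next addn1.
by rewrite (@prime_pi_gap a) //; lia.
Qed.

Lemma nth_primeS m : nth_prime m.+1 = next_prime (nth_prime m).
Proof. exact: iterS. Qed.

Lemma prime_pi_nth_prime m : prime_pi (nth_prime m) = m.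
Proof. by elim: m => [//|m IHm]; rewrite nth_primeS prime_pi_next IHm. Qed.

Lemma nth_prime_ltS m : nth_prime m < nth_prime m.+1.
Proof. by rewrite nth_primeS; case: (next_primeP (nth_prime m)). Qed.

Lemma ltn_nth_prime : {homo nth_prime : m n / m < n}.
Proof. exact: homo_ltn ltn_trans nth_prime_ltS. Qed.

Lemma nth_prime_gt m : m < nth_prime m.
Proof. by elim: m => [//|m IHm]; apply: leq_ltn_trans IHm (nth_prime_ltS m). Qed.

Lemma nth_prime_leqE m x : 0 < m -> (nth_prime m <= x) = (m <= prime_pi x).
Proof.
case: m => // m _; apply/idP/idP => [|m_le].
  by rewrite -{2}(prime_pi_nth_prime m.+1); apply: leq_prime_pi.
rewrite leqNgt; apply/negP; rewrite nth_primeS => x_lt.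
case: (leqP x (nth_prime m)) => [x_le | /ltnW nth_le].
  by have := leq_prime_pi _ _ x_le; rewrite prime_pi_nth_prime; lia.
by move: m_le; rewrite (@prime_pi_gap (nth_prime m)) ?nth_le // prime_pi_nth_prime ltnn.
Qed.

Lemma central_binS n : n.+1 * 'C(n.+1.*2, n.+1) = (n.*2.+1).*2 * 'C(n.*2, n).
Proof.
have := mul_bin_diag n.*2.+2 n; have := mul_bin_down n.*2.+1 n.
rewrite doubleS (_ : n.*2.+1 - n = n.+1) /=; [nia | lia].
Qed.

Lemma leq_bin_exp2 n m : 'C(n, m) <= 2 ^ n.
Proof.
have [mn | nm] := leqP m n; last by rewrite bin_small.
rewrite -[2]/(1 + 1) expnDn (bigD1 (inord m)) //= inordK ?ltnS //.
by rewrite !exp1n !muln1 leq_addr.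
Qed.

Lemma exp2_leq_central_bin n : 2 ^ n <= 'C(n.*2, n).
Proof.
elim: n => [//|n IHn]; rewrite -(leq_pmul2l (ltn0Sn n)) central_binS expnS.
nia.
Qed.

Lemma prime_dvd_fact p n : prime p -> p %| n`! -> p <= n.
Proof.
move=> pr_p; rewrite fact_prod Euclid_dvd_prod // big_has => /hasP[i].
by rewrite mem_index_iota => /andP[i_gt0 i_le] /dvdn_leq-/(_ i_gt0)/leq_trans->.
Qed.

Lemma prod_primes_dvdn s m : uniq s -> all prime s ->
  {in s, forall p, p %| m} -> \prod_(p <- s) p %| m.
Proof.
elim: s => [|p s IHs] /=; first by rewrite big_nil dvd1n.
case/andP=> p_s uniq_s /andP[pr_p pr_s] s_dvd; rewrite big_cons Gauss_dvd.
  by rewrite s_dvd ?mem_head // IHs // => q qs; apply: s_dvd; rewrite inE qs orbT.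
rewrite prime_coprime // Euclid_dvd_prod // big_has; apply/hasPn => q qs /=.
by rewrite dvdn_prime2 //; [apply: contraNN p_s => /eqP-> | apply: (allP pr_s)].
Qed.

Lemma exp_count_primes_leq_central_bin n :
  n ^ count prime (iota n.+1 n) <= 'C(n.*2, n).
Proof.
have C_gt0 : 0 < 'C(n.*2, n) by rewrite bin_gt0 -addnn leq_addr.
rewrite -size_filter; set s := [seq p <- _ | _].
apply: (@leq_trans (\prod_(p <- s) p)).
  rewrite -(iter_muln_1 n) -count_predT -big_const_seq big_seq [leqRHS]big_seq.
  by apply: leq_prod => p; rewrite mem_filter mem_iota => /and3P[_ /ltnW].
apply: dvdn_leq C_gt0 _; apply: prod_primes_dvdn.
- by rewrite filter_uniq // iota_uniq.
- exact: filter_all.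
move=> p; rewrite mem_filter mem_iota => /andP[pr_p /andP[n_lt p_le]].
have := bin_fact (leq_addr n n); rewrite addnK addnn => C_fact.
have : p %| (n.*2)`! by apply: dvdn_fact; lia.
rewrite -C_fact !Euclid_dvdM // orbb => /orP[// | /(prime_dvd_fact _ _ pr_p)]; lia.
Qed.

Lemma logn_fact_sum_wide p a n : prime p -> a <= n ->
  logn p a`! = \sum_(1 <= k < n.+1) a %/ p ^ k.
Proof.
move=> pr_p an; rewrite logn_fact // (@big_cat_nat _ _ _ a.+1 1 n.+1) //=.
rewrite [X in _ = _ + X]big1_seq ?addn0 // => k.
rewrite mem_index_iota => /andP[_ /andP[ak _]].
by rewrite divn_small // (leq_trans ak) // ltnW // ltn_expl // prime_gt1.
Qed.

Lemma sum_exp_leq_trunc_log p n N : 1 < p ->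
  \sum_(1 <= k < N.+1) (p ^ k <= n) <= minn N (trunc_log p n).
Proof.
move=> p_gt1; elim: N => [|N IHN]; first by rewrite big_geq.
rewrite big_nat_recr //=; case: (boolP (p ^ N.+1 <= n)) => [/(trunc_log_max p_gt1)|] /=; lia.
Qed.

Lemma logn_bin_leq p n m : prime p -> 0 < n -> p ^ logn p 'C(n, m) <= n.
Proof.
move=> pr_p n_gt0; have p_gt1 := prime_gt1 pr_p.
have [mn | nm] := leqP m n; last by rewrite bin_small ?logn0.
have C_gt0 : 0 < 'C(n, m) by rewrite bin_gt0.
have logn_C : logn p n`! = logn p 'C(n, m) + (logn p m`! + logn p (n - m)`!).
  by rewrite -(bin_fact mn) !lognM ?muln_gt0 ?fact_gt0.
have floor_sub k : n %/ p ^ k <= m %/ p ^ k + (n - m) %/ p ^ k + (p ^ k <= n).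
  have [pk_le | n_lt] := leqP (p ^ k) n; last by rewrite divn_small.
  rewrite -{1}(subnKC mn) divnD ?expn_gt0 ?prime_gt0 //=; lia.
have : logn p 'C(n, m) <= trunc_log p n.
  move: logn_C; rewrite logn_fact // (logn_fact_sum_wide _ _ _ pr_p mn).
  rewrite (logn_fact_sum_wide _ _ _ pr_p (leq_subr m n)) => logn_C.
  have : \sum_(1 <= k < n.+1) n %/ p ^ k <=
         \sum_(1 <= k < n.+1) (m %/ p ^ k + (n - m) %/ p ^ k + (p ^ k <= n)).
    by apply: leq_sum => k _; apply: floor_sub.
  rewrite !big_split /=.
  have := sum_exp_leq_trunc_log p n n p_gt1; lia.
by move/(leq_pexp2l (prime_gt0 pr_p))/leq_trans; apply; apply: trunc_logP.
Qed.

Lemma bin_leq_exp_prime_pi n m : 0 < n -> 'C(n, m) <= n ^ prime_pi n.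
Proof.
move=> n_gt0; have [mn | nm] := leqP m n; last by rewrite bin_small.
have C_gt0 : 0 < 'C(n, m) by rewrite bin_gt0.
rewrite {1}(prod_prime_decomp C_gt0) prime_decompE big_map /=.
apply: (@leq_trans (\prod_(p <- primes 'C(n, m)) n)).
  rewrite big_seq [leqRHS]big_seq; apply: leq_prod => p.
  by rewrite mem_primes => /and3P[pr_p _ _]; apply: logn_bin_leq.
rewrite big_const_seq count_predT iter_muln_1 leq_pexp2l //.
rewrite /prime_pi -size_filter; apply: uniq_leq_size; first exact: primes_uniq.
move=> p; rewrite mem_primes mem_filter mem_iota => /and3P[pr_p _ p_dvd] /=.
rewrite pr_p ltnS (prime_dvd_fact _ _ pr_p) //.
by rewrite -(bin_fact mn) dvdn_mulr.
Qed.

Lemma prime_pi_exp2_upper J : J * prime_pi (2 ^ J) <= 4 * 2 ^ J.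
Proof.
have block j : j * (prime_pi (2 ^ j.+1) - prime_pi (2 ^ j)) <= 2 ^ j.+1.
  have := leq_trans (exp_count_primes_leq_central_bin (2 ^ j)) (leq_bin_exp2 _ _).
  rewrite -expnM leq_exp2l // expnS mul2n -addnn prime_piD addKn; lia.
(* J pi(2^(J+1)) <= 6 2^J, which suffices as soon as (J+1)/J <= 4/3. *)
elim: J => [//|J IHJ]; have := block J.
have := leq_prime_pi _ _ (leq_pexp2l (isT : 0 < 2) (leqnSn J)).
rewrite expnS; case: J IHJ => [|[|[|J]]] //= IHJ; nia.
Qed.

Lemma prime_pi_exp2_lower J : 2 ^ J <= J.+1 * prime_pi (2 ^ J.+1).
Proof.
have pow_gt0 : 0 < 2 ^ J.+1 by rewrite expn_gt0.
have := exp2_leq_central_bin (2 ^ J); rewrite -mul2n -expnS.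
move/leq_trans/(_ (bin_leq_exp_prime_pi _ (2 ^ J) pow_gt0)).
by rewrite -expnM leq_exp2l.
Qed.

Lemma nth_prime_lower j m : 2 ^ j <= m -> m * j.+1 <= 8 * nth_prime m.
Proof.
move=> jm; set P := nth_prime m; set J := (trunc_log 2 P).+1.
have m_gt0 : 0 < m by apply: leq_trans jm; rewrite expn_gt0.
have P_gt0 : 0 < P by apply: leq_ltn_trans (nth_prime_gt m).
have P_lt : P < 2 ^ J := trunc_log_ltn P (isT : 1 < 2).
have J_le : 2 ^ J <= P.*2 by rewrite expnS mul2n leq_double trunc_logP.
have m_le : m <= prime_pi (2 ^ J).
  by rewrite -(nth_prime_leqE _ _ m_gt0) ltnW.
have j_lt : j < J.
  rewrite -(ltn_exp2l _ _ (isT : 1 < 2)) (leq_ltn_trans jm) //.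
  exact: ltn_trans (nth_prime_gt m) P_lt.
have := prime_pi_exp2_upper J; nia.
Qed.

Lemma nth_prime_le_exp2 m J : m * J.+1 <= 2 ^ J -> nth_prime m <= 2 ^ J.+1.
Proof.
case: m => [|m] m_le; first by rewrite expn_gt0.
by rewrite nth_prime_leqE //; have := prime_pi_exp2_lower J; nia.
Qed.

Lemma nth_prime_upper j m : 0 < m -> m < 2 ^ j.+1 -> nth_prime m <= 32 * m * j.+1.
Proof.
move=> m_gt0 m_lt; set i := trunc_log 2 m.
have i_lt : i < j.+1.
  by rewrite -(ltn_exp2l _ _ (isT : 1 < 2)) (leq_ltn_trans (trunc_logP _ _)).
suff : nth_prime m <= 32 * m * i.+1.
  by move/leq_trans; apply; rewrite leq_mul2l i_lt orbT.
(* With 2^i <= m < 2^t and 2^l <= t < 2^(l+1), the exponent J = t + l + 3 is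
   large enough for m (J+1) <= 2^J, yet 2^(J+1) <= 32 m t. *)
set t := i.+1; set l := trunc_log 2 t.
have m_lt' : m < 2 ^ t := trunc_log_ltn m (isT : 1 < 2).
have t_le : 2 ^ t <= m.*2 by rewrite expnS mul2n leq_double trunc_logP.
have l_le : 2 ^ l <= t by rewrite trunc_logP.
have t_lt : t < 2 ^ l.+1 := trunc_log_ltn t (isT : 1 < 2).
have l_lt : l < 2 ^ l := ltn_expl l (isT : 1 < 2).
apply: leq_trans (nth_prime_le_exp2 m (t + l + 3) _) _;
  rewrite -addnS !expnD expnS in t_lt *; nia.
Qed.

(** * Growth of iterated primes *)

Lemma iter_primeS k n : iter_prime k.+1 n = nth_prime (iter_prime k n).
Proof. exact: iterS. Qed.

Lemma iter_primeD k l n : iter_prime (k + l) n = iter_prime k (iter_prime l n).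
Proof. exact: iterD. Qed.

Lemma ltn_iter_prime k : {homo iter_prime k : m n / m < n}.
Proof. by elim: k => [//|k IHk] m n mn; rewrite !iter_primeS ltn_nth_prime ?IHk. Qed.

Lemma leq_iter_prime k : {homo iter_prime k : m n / m <= n}.
Proof. by move=> m n; rewrite (leq_mono (ltn_iter_prime k)). Qed.

Lemma iter_prime_ge k n : n + k <= iter_prime k n.
Proof.
elim: k => [|k IHk]; first by rewrite addn0.
by rewrite iter_primeS addnS (leq_ltn_trans IHk) ?nth_prime_gt.
Qed.

Lemma iter_prime_gt0 k n : 0 < n -> 0 < iter_prime k n.
Proof. by move=> n_gt0; apply: leq_trans (iter_prime_ge k n); rewrite addn_gt0 n_gt0. Qed.

Lemma iter_prime2_lower j m : 2 ^ j <= m -> 2 ^ j * j.+1 ^ 2 <= 64 * iter_prime 2 m.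
Proof.
move=> jm; have := nth_prime_lower _ _ jm.
have /nth_prime_lower : 2 ^ j <= nth_prime m by apply: leq_trans jm (ltnW (nth_prime_gt m)).
rewrite /iter_prime /=; nia.
Qed.

Lemma iter_prime_upper k :
  exists2 C, 0 < C & forall J, iter_prime k (2 ^ J) <= C * 2 ^ J * J.+1 ^ k.
Proof.
elim: k => [|k [C C_gt0 HC]]; first by exists 1 => // J; rewrite muln1 mul1n.
exists (32 * C * (C + k + 1)); first by rewrite !muln_gt0 C_gt0 addn1.
move=> J; rewrite iter_primeS; set x := iter_prime k (2 ^ J).
have x_gt0 : 0 < x by rewrite iter_prime_gt0 ?expn_gt0.
have x_le : x <= 2 ^ (C + J + J * k).
  have Jk : J.+1 ^ k <= 2 ^ (J * k).
    by rewrite expnM; case: k {HC x x_gt0} => [//|k]; rewrite leq_exp2r // ltn_expl.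
  by apply: leq_trans (HC J) _; rewrite !expnD leq_mul // leq_mul // ltnW // ltn_expl.
have x_lt : x < 2 ^ (C + J + J * k).+1 by rewrite (leq_ltn_trans x_le) // ltn_exp2l.
apply: leq_trans (nth_prime_upper _ _ x_gt0 x_lt) _.
have log_le : (C + J + J * k).+1 <= (C + k + 1) * J.+1 by nia.
apply: leq_trans (leq_mul (leq_mul (leqnn 32) (HC J)) log_le) _.
by rewrite expnS; nia.
Qed.

Local Open Scope ring_scope.

(** * Series with nonnegative terms *)

Section NonnegativeSeries.
Context {R : realType}.
Implicit Types (u w : R ^nat) (F : nat -> R).

Lemma cvg_nneg_seriesP u : (forall n, 0 <= u n) ->
  cvgn (series u) <-> exists M, forall n, series u n <= M.
Proof.
move=> u_ge0; have u_nd : nondecreasing_seq (series u).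
  by apply: nondecreasing_series => n _ _.
split=> [u_cvg | [M u_le]]; first by exists (limn (series u)); apply: nondecreasing_cvgn_le.
by apply: nondecreasing_is_cvgn => //; exists M => _ [n _ <-].
Qed.

Lemma series_succE F n : series (fun k => F k.+1) n = \sum_(1 <= m < n.+1) F m.
Proof. by rewrite big_add1 seriesEnat. Qed.

Definition dyadic_block F j := \sum_(2 ^ j <= m < 2 ^ j.+1) F m.

Lemma series_dyadic_block F J : series (dyadic_block F) J = \sum_(1 <= m < 2 ^ J) F m.
Proof.
elim: J => [|J IHJ]; first by rewrite /series /= !big_geq.
rewrite seriesSr IHJ /dyadic_block -(@big_cat_nat _ _ _ (2 ^ J)) //.
  by rewrite expn_gt0.
by rewrite leq_pexp2l ?leqnSn.
Qed.

Lemma cvg_series_dyadicP F : (forall m, 0 <= F m) ->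
  cvgn (series (fun n => F n.+1)) <-> cvgn (series (dyadic_block F)).
Proof.
move=> F_ge0; have block_ge0 j : 0 <= dyadic_block F j by apply: sumr_ge0.
rewrite !cvg_nneg_seriesP //; split=> -[M le_M]; exists M => n.
  have pow_gt0 : (0 < 2 ^ n)%N by rewrite expn_gt0.
  by rewrite series_dyadic_block -(prednK pow_gt0) -series_succE.
apply: le_trans (le_M n); rewrite series_succE series_dyadic_block.
rewrite [leRHS](@big_cat_nat _ _ _ n.+1) //= ?lerDl ?sumr_ge0 //.
exact: ltn_expl.
Qed.

Lemma sum_dyadic_block_cst (c : R) j : \sum_(2 ^ j <= m < 2 ^ j.+1) c = c *+ 2 ^ j.
Proof. by rewrite sumr_const_nat expnS mul2n -addnn addnK. Qed.

Lemma dyadic_block_le F (d : R) j :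
  (forall m, (2 ^ j <= m < 2 ^ j.+1)%N -> F m <= d / (2 ^ j)%:R) -> dyadic_block F j <= d.
Proof.
move=> F_le; apply: le_trans (ler_sum_nat F_le) _.
by rewrite sum_dyadic_block_cst -(mulr_natr (d / _)) divfK.
Qed.

Lemma dyadic_block_ge F (d : R) j :
  (forall m, (2 ^ j <= m < 2 ^ j.+1)%N -> d / (2 ^ j)%:R <= F m) -> d <= dyadic_block F j.
Proof.
move=> F_ge; apply: le_trans (ler_sum_nat F_ge).
by rewrite sum_dyadic_block_cst -(mulr_natr (d / _)) divfK.
Qed.

Lemma series_subseq_le w (g : nat -> nat) : (forall n, 0 <= w n) -> cvgn (series w) ->
  {homo g : m n / (m < n)%N} ->
  forall N, series (w \o g) N <= limn (series w) - series w (g 0%N).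
Proof.
move=> w_ge0 w_cvg g_incr N.
have g0_le n : (g 0%N <= g n)%N by case: n => // n; apply/ltnW/g_incr.
suff : series (w \o g) N <= \sum_(g 0%N <= m < g N) w m.
  move/le_trans; apply; rewrite -sub_series_geq // lerB //.
  by apply: nondecreasing_cvgn_le => //; apply: nondecreasing_series => n _ _.
elim: N => [|N IHN]; first by rewrite /series /= !big_geq.
rewrite seriesSr (@big_cat_nat _ _ _ (g N).+1) ?big_nat_recr //=; [|exact: leqW|exact: g_incr].
by rewrite -[leLHS]addr0 lerD ?lerD2r ?sumr_ge0.
Qed.
End NonnegativeSeries.

Section Powers.
Context {R : realType}.

Lemma powR_exprn (x b : R) j : 0 <= x -> (x ^+ j) `^ b = (x `^ b) ^+ j.
Proof.
by move=> x_ge0; rewrite -powR_mulrn // -powRrM mulrC powRrM powR_mulrn ?powR_ge0.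
Qed.

Lemma powR_gt1 (x b : R) : 1 < x -> (1 < x `^ b) = (0 < b).
Proof.
move=> x_gt1; have x_gt0 := lt_trans ltr01 x_gt1.
by rewrite /powR (gt_eqF x_gt0) expR_gt1 pmulr_lgt0 ?ln_gt0.
Qed.

Lemma powR_le_exp2_poly (a : R) x C J k : 0 <= a -> a <= 1 -> (0 < C)%N ->
  (x <= C * 2 ^ J * J.+1 ^ k)%N -> x%:R `^ a <= C%:R * J.+1%:R ^+ k * (2 `^ a) ^+ J.
Proof.
move=> a_ge0 a_le1 C_gt0 x_le.
apply: le_trans (_ : (C * 2 ^ J * J.+1 ^ k)%N%:R `^ a <= _).
  by apply: ge0_ler_powR; rewrite ?nnegrE ?ler0n ?ler_nat.
rewrite !natrM !powRM ?mulr_ge0 ?exprn_ge0 ?ler0n // natrX powR_exprn //.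
have C_pow : C%:R `^ a <= C%:R :> R by rewrite ler1_powR // ler1n.
have J_pow : (J.+1 ^ k)%:R `^ a <= J.+1%:R ^+ k :> R.
  by rewrite natrX ler1_powR // exprn_ege1 // ler1n.
rewrite [leRHS]mulrAC ler_pM ?mulr_ge0 ?powR_ge0 ?exprn_ge0 ?powR_ge0 //.
by rewrite ler_pM ?powR_ge0 ?exprn_ge0 ?powR_ge0.
Qed.

Lemma ler_powRN (x y a : R) : 0 < x -> x <= y -> 0 <= a -> y `^ (- a) <= x `^ (- a).
Proof.
move=> x_gt0 xy a_ge0; have y_gt0 := lt_le_trans x_gt0 xy.
rewrite !powRN lef_pV2 ?posrE ?powR_gt0 //.
by apply: ge0_ler_powR; rewrite // nnegrE ltW.
Qed.

Lemma cvg_series_powRN (a : R) : 1 < a -> cvgn (series (fun n => n.+1%:R `^ (- a))).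
Proof.
move=> a_gt1; set r := 2 `^ (1 - a).
have r_lt1 : `|r| < 1.
  rewrite ger0_norm ?powR_ge0 // /r -opprB powRN invf_lt1 ?powR_gt0 //.
  by rewrite powR_gt1 ?ltr1n // subr_gt0.
apply/(@cvg_series_dyadicP _ (fun m => m%:R `^ (- a))) => [m|]; first exact: powR_ge0.
apply: (series_le_cvg _ _ _ (is_cvg_geometric_series (a := 1) r_lt1)) => j.
- by apply: sumr_ge0 => m _; apply: powR_ge0.
- by rewrite /geometric /= mul1r exprn_ge0 ?powR_ge0.
apply: dyadic_block_le => m /andP[jm _].
rewrite /geometric /= mul1r /r powRD ?pnatr_eq0 ?implybT // (powRr1 (ler0n _ 2)).
rewrite exprMn -natrX mulrC mulKf ?pnatr_eq0 ?expn_eq0 // -powR_exprn // -natrX.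
by rewrite ler_powRN ?ltr0n ?expn_gt0 ?ler_nat //; lra.
Qed.

Lemma mulrn_le_exprD1 (h : R) n : 0 <= h -> h *+ n <= (1 + h) ^+ n.
Proof.
move=> h_ge0; elim: n => [|n IHn]; first by rewrite mulr0n exprn_ge0 // addr_ge0.
have : 1 <= (1 + h) ^+ n by rewrite exprn_ege1 // lerDl.
by rewrite mulrSr exprSr; nra.
Qed.

(* By Bernoulli, q^(N(k+1)) >= (N (q-1))^(k+1), which beats (N(k+1)+1)^k for N large. *)
Lemma exists_exprn_gt_poly (q D : R) k : 1 < q -> exists J : nat, D * J.+1%:R ^+ k < q ^+ J.
Proof.
move=> q_gt1; set h := q - 1; have h_gt0 : 0 < h by rewrite subr_gt0.
have [n _ /(_ n (leqnn n)) Dn] := nbhs_infty_gtr (`|D| * k.+2%:R ^+ k / h ^+ k.+1).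
set N := n.+1; exists (N * k.+1)%N.
have Nh_le : N%:R * h <= q ^+ N.
  have -> : q = 1 + h by rewrite /h addrC subrK.
  by rewrite mulr_natl mulrn_le_exprD1 ?ltW.
have J_le : (N * k.+1).+1%:R ^+ k <= k.+2%:R ^+ k * N%:R ^+ k :> R.
  by rewrite -exprMn -natrM lerXn2r ?nnegrE ?ler0n // ler_nat; lia.
have DN_lt : `|D| * k.+2%:R ^+ k < N%:R * h ^+ k.+1.
  by rewrite -ltr_pdivrMr ?exprn_gt0 // (lt_trans Dn) // ltr_nat.
apply: le_lt_trans (ler_wpM2r (exprn_ge0 _ (ler0n _ _)) (ler_norm D)) _.
apply: le_lt_trans (ler_wpM2l (normr_ge0 D) J_le) _.
have Nh_ge0 : 0 <= N%:R * h by rewrite mulr_ge0 ?ltW.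
have qN_ge0 : 0 <= q ^+ N by rewrite exprn_ge0 // ltW // (lt_trans ltr01).
rewrite exprM; apply: lt_le_trans (lerXn2r k.+1 Nh_ge0 qN_ge0 Nh_le).
have -> : (N%:R * h) ^+ k.+1 = N%:R * h ^+ k.+1 * N%:R ^+ k by rewrite exprMn exprS; ring.
by rewrite mulrA ltr_pM2r ?exprn_gt0 ?ltr0n.
Qed.

End Powers.

(** * The series S_k *)

Section IteratedPrimeSeries.
Context {R : realType}.

Lemma S_term_ge0 k (a : R) n : 0 <= S_term k a n.
Proof. exact: powR_ge0. Qed.

Lemma dvg_S_term0 : ~ cvgn (series (S_term 0 (1 : R))).
Proof.
have -> : S_term 0 (1 : R) = harmonic by apply/funext => n; rewrite /S_term powR_inv1.
exact: dvg_harmonic.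
Qed.

Lemma cvg_S_term_gt1 k (a : R) : 1 < a -> cvgn (series (S_term k a)).
Proof.
move=> a_gt1; have : cvgn (series (S_term 0 a)) by exact: cvg_series_powRN.
apply: series_le_cvg (S_term_ge0 k a) (S_term_ge0 0 a) _.
move=> n; rewrite /S_term ler_powRN ?ltr0n ?ler_nat ?(ltW (lt_trans ltr01 a_gt1)) //.
exact: leq_trans (leq_addr k _) (iter_prime_ge k n.+1).
Qed.

Lemma cvg_S_term2 : cvgn (series (S_term 2 (1 : R))).
Proof.
have cvg_pow2 : cvgn (series (fun j => 64 * j.+1%:R `^ (- 2) : R)).
  by apply: (is_cvg_seriesZ (k := 64)); apply: cvg_series_powRN; rewrite ltr1n.
apply/(@cvg_series_dyadicP _ (fun m => (iter_prime 2 m)%:R `^ (- 1))) => [m|].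
  exact: powR_ge0.
apply: series_le_cvg cvg_pow2 => j.
- by apply: sumr_ge0 => m _; apply: powR_ge0.
- by rewrite /= mulr_ge0 ?powR_ge0.
apply: dyadic_block_le => m /andP[jm _].
have p_gt0 : (0 < iter_prime 2 m)%N by apply/iter_prime_gt0/(leq_trans _ jm); rewrite expn_gt0.
rewrite /= powR_inv1 // powR_invn // -mulrA -invfM -natrX -natrM.
rewrite ler_pdivlMr ?ltr0n ?muln_gt0 ?expn_gt0 // mulrC ler_pdivrMr ?ltr0n //.
by rewrite -natrM ler_nat mulnC iter_prime2_lower.
Qed.

Lemma dvg_S_term1 : ~ cvgn (series (S_term 1 (1 : R))).
Proof.
set F := fun m => (iter_prime 1 m)%:R `^ (- 1) : R.
move/(@cvg_series_dyadicP _ F (fun m => powR_ge0 _ _)) => block_cvg.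
apply: (@dvg_harmonic R).
have : cvgn (series (fun j => 64 * dyadic_block F j)) by apply: (is_cvg_seriesZ (k := 64)).
apply: series_le_cvg => j; first exact: harmonic_ge0.
  by rewrite mulr_ge0 // sumr_ge0 // => m _; apply: powR_ge0.
rewrite -ler_pdivrMl ?ltr0n //; apply: dyadic_block_ge => m /andP[jm mj].
have m_gt0 : (0 < m)%N by apply: leq_trans jm; rewrite expn_gt0.
rewrite /F powR_inv1 // -!invfM lef_pV2 ?posrE ?mulr_gt0 ?ltr0n ?expn_gt0 ?iter_prime_gt0 //.
rewrite -!natrM ler_nat; have := nth_prime_upper _ _ m_gt0 mj.
by rewrite /iter_prime /= expnS in mj *; nia.
Qed.

(* The first 2^J terms are all at least (p^(k)_(2^J))^(-a), so bounded partial sums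
   would force 2^((1-a)J) <= M C (J+1)^k for every J. *)
Lemma dvg_S_term_lt1 k (a : R) : 0 <= a -> a < 1 -> ~ cvgn (series (S_term k a)).
Proof.
move=> a_ge0 a_lt1 /(cvg_nneg_seriesP _ (S_term_ge0 k a)) [M le_M].
have M_ge0 : 0 <= M by apply: le_trans (le_M 0%N); rewrite /series /= big_geq.
have [C C_gt0 HC] := iter_prime_upper k.
have q_gt1 : 1 < 2 `^ (1 - a) by rewrite powR_gt1 ?ltr1n // subr_gt0.
have [J] := exists_exprn_gt_poly _ (M * C%:R) k q_gt1; apply/negP; rewrite -leNgt.
set x := iter_prime k (2 ^ J); set p := 2 `^ a.
have x_gt0 : (0 < x)%N by rewrite iter_prime_gt0 // expn_gt0.
have p_gt0 : 0 < p ^+ J by rewrite exprn_gt0 ?powR_gt0.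
have partial_ge : (2 ^ J)%:R <= M * x%:R `^ a.
  rewrite -ler_pdivrMr ?powR_gt0 ?ltr0n // -powRN; apply: le_trans (le_M (2 ^ J)%N).
  rewrite mulr_natl -[X in _ *+ X]subn0 -sumr_const_nat seriesEnat.
  apply: ler_sum_nat => n /andP[_ n_lt].
  by rewrite ler_powRN ?ltr0n ?iter_prime_gt0 // ler_nat leq_iter_prime.
have x_le := powR_le_exp2_poly _ _ _ _ _ a_ge0 (ltW a_lt1) C_gt0 (HC J).
rewrite powRB ?pnatr_eq0 ?implybT // (powRr1 (ler0n _ 2)) -/p expr_div_n ler_pdivrMr //.
rewrite natrX in partial_ge; apply: le_trans partial_ge _.
by rewrite -!mulrA ler_wpM2l // mulrA.
Qed.

(* p^(j+2)_(n+1) = p^(2)_(p^(j)_(n+1)) and p^(j)_1 > j: S_(j+2) is dominated by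
   a subseries of S_2^(1) avoiding its first j terms. *)
Lemma S_term_series_le_tail j (a : R) N : 1 <= a ->
  series (S_term j.+2 a) N <= limn (series (S_term 2 (1 : R))) - series (S_term 2 1) j.
Proof.
move=> a_ge1; set w := S_term 2 (1 : R); set g := fun n => (iter_prime j n.+1).-1.
have gS n : (g n).+1 = iter_prime j n.+1 by rewrite prednK // iter_prime_gt0.
have g_incr : {homo g : m n / (m < n)%N} by move=> m n mn; rewrite -ltnS !gS ltn_iter_prime.
have w_nd : nondecreasing_seq (series w).
  by apply: nondecreasing_series => n _ _; apply: S_term_ge0.
apply: (@le_trans _ _ (series (w \o g) N)).
  apply: ler_sum => n _; rewrite /comp /w /S_term gS -iter_primeD add2n.
  by rewrite ler_powR ?lerN2 // ler1n iter_prime_gt0.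
apply: le_trans (series_subseq_le _ _ (@S_term_ge0 2 1) cvg_S_term2 g_incr N) _.
apply: lerB => //; apply: w_nd; rewrite -ltnS gS.
by have := iter_prime_ge j 1; rewrite add1n.
Qed.

Lemma cvg_S_term_ge2 j (a : R) : 1 <= a -> cvgn (series (S_term j.+2 a)).
Proof.
move=> a_ge1; apply/(cvg_nneg_seriesP _ (S_term_ge0 _ _)).
by eexists => N; apply: S_term_series_le_tail.
Qed.

Lemma lim_S_term_ge2_bounds j (a : R) : 1 <= a ->
  0 <= limn (series (S_term j.+2 a))
    <= limn (series (S_term 2 (1 : R))) - series (S_term 2 1) j.
Proof.
move=> a_ge1; have S_cvg := cvg_S_term_ge2 j a a_ge1; apply/andP; split.
  by apply: limr_ge => //; apply: nearW => N; apply: sumr_ge0 => n _; apply: S_term_ge0.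
by apply: limr_le => //; apply: nearW => N; apply: S_term_series_le_tail.
Qed.
End IteratedPrimeSeries.

Local Open Scope classical_set_scope.

Theorem theorem3 (R : realType) :
  (forall (k : nat) (alpha : R), 0 <= alpha ->
     (cvgn (series (S_term k alpha)) <->
      (1 < alpha \/ (alpha = 1 /\ (2 <= k)%N)))) /\
  (forall alpha : R, 1 <= alpha ->
     (fun k : nat => limn (series (S_term k alpha))) @ \oo --> (0 : R)).
Proof.
split=> [k a a_ge0 | a a_ge1]; first split=> [S_cvg | [a_gt1 | [-> k_ge2]]].
- case: (ltrgtP a 1) => [a_lt1 | a_gt1 | a_eq1]; [| by left | right].
    by case: (dvg_S_term_lt1 _ _ a_ge0 a_lt1 S_cvg).
  rewrite a_eq1 in S_cvg *; split=> //.
  by case: k S_cvg => [/dvg_S_term0 | [/dvg_S_term1 |]].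
- exact: cvg_S_term_gt1.
- by case: k k_ge2 => [|[|j]] // _; apply: cvg_S_term_ge2.
rewrite -(cvg_shiftn 2); set w := S_term 2 (1 : R).
apply: (@squeeze_cvgr _ _ _ _ (fun=> 0) (fun j => limn (series w) - series w j)).
- by apply: nearW => j; rewrite /= addn2; apply: lim_S_term_ge2_bounds.
- exact: cvg_cst.
by rewrite -(subrr (limn (series w))); apply: cvgB; [apply: cvg_cst | apply: cvg_S_term2].
Qed.
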